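(* Let $S$ be a random matrix with a discrete distribution such that $\mathbb{P}(S=S_i) = p_i >0$, where $S_i \in \mathbb{R}^{n \times q_i}$ for $i =1,\ldots, r$. Let \[ \mathbb{S} := \begin{pmatrix} S_1^\top \otimes S_1^\top\\ \vdots \\ S_r^\top \otimes S_r^\top \end{pmatrix} \in \mathbb{R}^{\sum_{i=1}^r q_i^2 \times n}. \] Then the iterates \[ X_{k+1} = X_k + A S (S^\top A^2 S)^{\dagger} S^\top ( A - AX_kA) S (S^\top A^2 S)^\dagger S^\top A \] (with $S$ drawn independently from this distribution at each iteration and $X_0 = AWA$ for some matrix $W$) converge in the sense $\mathbb{E}[\|X_{k} - A^\dagger\|_F^2] \leq \rho^{k} \|X_{0}-A^\dagger\|_F^2$ with a rate \[ \rho := 1- \inf_{R = A Q A,\ Q \in \mathbb{R}^{n\times n},\ \|R\|_F^2 =1} \langle \mathbb{E}[ZRZ],R\rangle <1, \qquad Z := A S (S^\top A^2 S)^{\dagger} S^\top A, \] if \[ \bigcap_{i=1}^r \{R \,: \, S_i^\top ARA S_i =0\} \subset \{R\, : \, ARA =0\}. \] Equivalently, this condition holds if and only if \[ \mathrm{Null}(\mathbb{S} \, (A \otimes A))\subset \mathrm{Null}(A \otimes A). \]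
   Context: $A \in \mathbb{R}^{n\times n}$ is a symmetric matrix and $A^\dagger$ its Moore-Penrose pseudoinverse. $\otimes$ denotes the Kronecker product, $\mathrm{Null}(\cdot)$ the null space, $\langle X,Y\rangle = \mathrm{Tr}(X^\top Y)$ the Frobenius inner product and $\|\cdot\|_F$ the Frobenius norm. Condition involving $R$ is understood via vectorization $\vec{R}$ (stacking columns), using $\overrightarrow{ABC} = (C^\top\otimes A)\vec{B}$. *)

From HB Require Import structures.
From mathcomp Require Import all_boot all_order all_algebra.
From mathcomp Require Import mxtens.
From mathcomp Require Import boolp classical_sets reals.

Set Implicit Arguments.
Unset Strict Implicit.
Unset Printing Implicit Defensive.

Import Order.TTheory GRing.Theory Num.Theory.
Local Open Scope ring_scope.

Definition penrose (R : realType) (m k : nat) (A : 'M[R]_(m, k)) (X : 'M[R]_(k, m)) : Prop :=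
  [/\ A *m X *m A = A, X *m A *m X = X, (A *m X)^T = A *m X & (X *m A)^T = X *m A].

(* The Moore-Penrose pseudoinverse A^dagger (it exists and is unique; xget picks it). *)
Definition mp_pinv (R : realType) (m k : nat) (A : 'M[R]_(m, k)) : 'M[R]_(k, m) :=
  xget 0 (fun X => penrose A X).

Definition frob_inner (R : realType) (m k : nat) (X Y : 'M[R]_(m, k)) : R :=
  \tr (X^T *m Y).
Definition frob_norm2 (R : realType) (m k : nat) (X : 'M[R]_(m, k)) : R :=
  frob_inner X X.

Definition Zmat (R : realType) (n q : nat) (A : 'M[R]_n) (S : 'M[R]_(n, q)) : 'M[R]_n :=
  A *m S *m mp_pinv (S^T *m (A *m A) *m S) *m S^T *m A.

Definition step (R : realType) (n q : nat) (A : 'M[R]_n) (S : 'M[R]_(n, q)) (X : 'M[R]_n)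
  : 'M[R]_n :=
  X + A *m S *m mp_pinv (S^T *m (A *m A) *m S) *m S^T *m (A - A *m X *m A)
        *m S *m mp_pinv (S^T *m (A *m A) *m S) *m S^T *m A.

Definition iterates (R : realType) (n r : nat) (q : 'I_r -> nat)
  (S : forall i : 'I_r, 'M[R]_(n, q i)) (A X0 : 'M[R]_n) (s : seq 'I_r) : 'M[R]_n :=
  foldl (fun X i => step A (S i) X) X0 s.

(* E[ ||X_k - A^dag||_F^2 ] for i.i.d. draws with P(S = S_i) = p_i:
   sum over all k-tuples of draws, weighted by the product of probabilities. *)
Definition expected_err (R : realType) (n r : nat) (q : 'I_r -> nat)
  (S : forall i : 'I_r, 'M[R]_(n, q i)) (p : 'I_r -> R) (A X0 : 'M[R]_n) (k : nat) : R :=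
  \sum_(s : k.-tuple 'I_r)
     (\prod_(i <- s) p i) * frob_norm2 (iterates S A X0 s - mp_pinv A).

Definition EZRZ (R : realType) (n r : nat) (q : 'I_r -> nat)
  (S : forall i : 'I_r, 'M[R]_(n, q i)) (p : 'I_r -> R) (A Rm : 'M[R]_n) : 'M[R]_n :=
  \sum_(i < r) p i *: (Zmat A (S i) *m Rm *m Zmat A (S i)).

Definition rate (R : realType) (n r : nat) (q : 'I_r -> nat)
  (S : forall i : 'I_r, 'M[R]_(n, q i)) (p : 'I_r -> R) (A : 'M[R]_n) : R :=
  1 - inf [set x : R | exists Rm : 'M[R]_n,
             (exists Q : 'M[R]_n, Rm = A *m Q *m A) /\ frob_norm2 Rm = 1 /\
             x = frob_inner (EZRZ S p A Rm) Rm].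

Definition bbS (R : realType) (n r : nat) (q : 'I_r -> nat)
  (S : forall i : 'I_r, 'M[R]_(n, q i)) : 'M[R]_(\sum_(i < r) (q i * q i), n * n) :=
  \mxcol_(i < r) ((S i)^T *t (S i)^T).

From HB Require Import structures.
From mathcomp Require Import all_boot all_order all_algebra.
From mathcomp Require Import mxtens.
From mathcomp Require Import boolp classical_sets reals.
From mathcomp Require Import ring.
Import Order.TTheory GRing.Theory Num.Theory.
Local Open Scope ring_scope.
Set Implicit Arguments.
Unset Strict Implicit.
Unset Printing Implicit Defensive.

(* Write E_k = X_k - A^+.  As A A^+ A = A, one step reads E_{k+1} = E_k - Z E_k Z,
   where Z = Zmat A S is the orthogonal projector onto the range of A S; hence
   ||E_{k+1}||^2 = ||E_k||^2 - <Z E_k Z, E_k>, and averaging over S gives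
   E ||E_{k+1}||^2 <= rho ||E_k||^2 as long as E_k has the form A Q A, which the
   iteration preserves (X_0 = A W A, and A^+ has this form too).
   The rate is < 1 because, under the null-space condition, A (x) A factors through
   bbS (A (x) A): so ||A R A|| is controlled by the sketches
   S_i^T A R A S_i = (A S_i)^T (Z_i R Z_i) (A S_i), whose norms are dominated by
   <E[Z R Z], R>, while for R = A Q A the norm of R is controlled by that of A R A.
   The two forms of the condition correspond under vec: (A (x) A) vec R = vec (A R A). *)

Section Frobenius.
Variable R : realType.

Lemma frob_innerE m k (X Y : 'M[R]_(m, k)) :
  frob_inner X Y = \sum_i \sum_j X i j * Y i j.
Proof.
rewrite /frob_inner /mxtrace exchange_big; apply: eq_bigr => j _; rewrite !mxE.
by apply: eq_bigr => i _; rewrite !mxE.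
Qed.

Lemma frob_norm2E m k (X : 'M[R]_(m, k)) : frob_norm2 X = \sum_i \sum_j X i j ^+ 2.
Proof. by rewrite /frob_norm2 frob_innerE. Qed.

Lemma frob_innerC m k (X Y : 'M[R]_(m, k)) : frob_inner X Y = frob_inner Y X.
Proof. by rewrite !frob_innerE; apply: eq_bigr => i _; apply: eq_bigr => j _; rewrite mulrC. Qed.

Lemma frob_innerDl m k (X Y Z : 'M[R]_(m, k)) :
  frob_inner (X + Y) Z = frob_inner X Z + frob_inner Y Z.
Proof. by rewrite /frob_inner linearD mulmxDl linearD. Qed.

Lemma frob_innerZl m k a (X Y : 'M[R]_(m, k)) : frob_inner (a *: X) Y = a * frob_inner X Y.
Proof. by rewrite /frob_inner linearZ -scalemxAl linearZ. Qed.

Lemma frob_innerNl m k (X Y : 'M[R]_(m, k)) : frob_inner (- X) Y = - frob_inner X Y.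
Proof. by rewrite -scaleN1r frob_innerZl mulN1r. Qed.

Lemma frob_inner_suml m k (I : finType) (F : I -> 'M[R]_(m, k)) Y :
  frob_inner (\sum_i F i) Y = \sum_i frob_inner (F i) Y.
Proof. by rewrite /frob_inner linear_sum mulmx_suml linear_sum. Qed.

Lemma frob_norm2_ge0 m k (X : 'M[R]_(m, k)) : 0 <= frob_norm2 X.
Proof. by rewrite frob_norm2E sumr_ge0 // => i _; rewrite sumr_ge0 // => j _; apply: sqr_ge0. Qed.

Lemma frob_norm2_eq0 m k (X : 'M[R]_(m, k)) : frob_norm2 X = 0 -> X = 0.
Proof.
rewrite frob_norm2E => /psumr_eq0P rows0; apply/matrixP => i j; rewrite mxE.
have /psumr_eq0P row0 := rows0 (fun l _ => sumr_ge0 _ (fun j _ => sqr_ge0 _)) i isT.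
by apply/eqP; rewrite -sqrf_eq0; apply/eqP/row0 => // l _; apply: sqr_ge0.
Qed.

Lemma frob_norm2Z m k a (X : 'M[R]_(m, k)) : frob_norm2 (a *: X) = a ^+ 2 * frob_norm2 X.
Proof. by rewrite /frob_norm2 frob_innerZl frob_innerC frob_innerZl mulrA expr2. Qed.

Lemma frob_norm2B m k (X Y : 'M[R]_(m, k)) :
  frob_norm2 (X - Y) = frob_norm2 X - 2 * frob_inner X Y + frob_norm2 Y.
Proof.
rewrite /frob_norm2 frob_innerDl frob_innerNl ![frob_inner _ (X - Y)]frob_innerC.
by rewrite !frob_innerDl !frob_innerNl (frob_innerC Y X); ring.
Qed.

Lemma frob_norm2_mxcol r (p_ : 'I_r -> nat) k (C : forall i, 'M[R]_(p_ i, k)) :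
  frob_norm2 (\mxcol_i C i) = \sum_i frob_norm2 (C i).
Proof. by rewrite /frob_norm2 /frob_inner tr_mxcol mul_mxrow_mxcol raddf_sum. Qed.

Lemma cauchy_schwarz_sum (I : finType) (a b : I -> R) :
  (\sum_i a i * b i) ^+ 2 <= (\sum_i a i ^+ 2) * (\sum_i b i ^+ 2).
Proof.
rewrite expr2 !big_distrlr /= -(ler_pM2l (ltr0Sn _ 1)).
apply: (@le_trans _ _ (\sum_i \sum_j (a i ^+ 2 * b j ^+ 2 + a j ^+ 2 * b i ^+ 2))).
  rewrite mulr_sumr; apply: ler_sum => i _; rewrite mulr_sumr; apply: ler_sum => j _.
  have lagrange : a i ^+ 2 * b j ^+ 2 + a j ^+ 2 * b i ^+ 2 - 2 * (a i * b i * (a j * b j))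
                  = (a i * b j - a j * b i) ^+ 2 by ring.
  by rewrite -subr_ge0 lagrange sqr_ge0.
rewrite le_eqVlt; apply/orP; left; apply/eqP.
rewrite (eq_bigr _ (fun i _ => big_split _ _ _ _ _)) /=.
by rewrite big_split /= [X in _ + X]exchange_big /= mulr2n mulrDl mul1r.
Qed.

Lemma frob_norm2_mul_le m l k (X : 'M[R]_(m, l)) (Y : 'M[R]_(l, k)) :
  frob_norm2 (X *m Y) <= frob_norm2 X * frob_norm2 Y.
Proof.
rewrite !frob_norm2E mulr_suml; apply: ler_sum => i _.
rewrite [X in _ * X]exchange_big /= mulr_sumr; apply: ler_sum => j _.
by rewrite mxE; apply: cauchy_schwarz_sum.
Qed.

Lemma frob_norm2_mul3_le m l s k (X : 'M[R]_(m, l)) (M : 'M[R]_(l, s)) (Y : 'M[R]_(s, k)) :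
  frob_norm2 (X *m M *m Y) <= frob_norm2 X * frob_norm2 Y * frob_norm2 M.
Proof.
apply: (le_trans (frob_norm2_mul_le _ _)).
by rewrite mulrAC ler_wpM2r ?frob_norm2_ge0 ?frob_norm2_mul_le.
Qed.

Lemma gram_mulmx_eq0 m k l (B : 'M[R]_(m, k)) (X : 'M[R]_(k, l)) :
  B^T *m B *m X = 0 -> B *m X = 0.
Proof.
move=> BBX0; apply: frob_norm2_eq0.
by rewrite /frob_norm2 /frob_inner trmx_mul -mulmxA mxtrace_mulC !mulmxA BBX0 mul0mx mxtrace0.
Qed.

End Frobenius.

Section Pseudoinverse.
Variable R : realType.

Lemma row_free_gram_unit r k (F : 'M[R]_(r, k)) : row_free F -> F *m F^T \in unitmx.
Proof.
move=> freeF; rewrite -row_free_unit; apply: inj_row_free => v vFF0.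
have : (v *m F)^T^T *m (v *m F)^T *m 1%:M = 0.
  by rewrite trmxK trmx_mul mulmxA -(mulmxA v) vFF0 !mul0mx.
move/gram_mulmx_eq0; rewrite mulmx1 => /(congr1 trmx); rewrite trmxK trmx0 => /eqP.
by rewrite mulmx_free_eq0 // => /eqP.
Qed.

Lemma penrose_full_rank m k r (C : 'M[R]_(m, r)) (F : 'M[R]_(r, k)) :
  row_free F -> row_free C^T -> exists X, penrose (C *m F) X.
Proof.
move=> freeF freeC.
have uF := row_free_gram_unit freeF.
have uC := row_free_gram_unit freeC; rewrite trmxK in uC.
set GF := F *m F^T in uF *; set GC := C^T *m C in uC *.
have GF_sym : GF^T = GF by rewrite /GF trmx_mul trmxK.
have GC_sym : GC^T = GC by rewrite /GC trmx_mul trmxK.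
set X := F^T *m invmx GF *m invmx GC *m C^T.
have AX : C *m F *m X = C *m invmx GC *m C^T.
  by rewrite !mulmxA -(mulmxA C F) -/GF -(mulmxA C GF) mulmxV // mulmx1.
have XA : X *m (C *m F) = F^T *m invmx GF *m F.
  by rewrite !mulmxA -(mulmxA _ C^T C) -/GC -(mulmxA _ (invmx GC) GC) mulVmx // mulmx1.
exists X; split.
- by rewrite AX !mulmxA -(mulmxA _ C^T C) -/GC -(mulmxA _ (invmx GC) GC) mulVmx // mulmx1.
- by rewrite XA !mulmxA -(mulmxA _ F F^T) -/GF -(mulmxA _ (invmx GF) GF) mulVmx // mulmx1.
- by rewrite AX !trmx_mul trmxK trmx_inv GC_sym mulmxA.
- by rewrite XA !trmx_mul trmxK trmx_inv GF_sym mulmxA.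
Qed.

Lemma mp_pinvP m k (A : 'M[R]_(m, k)) : penrose A (mp_pinv A).
Proof.
apply: xgetPex; rewrite -(mulmx_base A).
apply: penrose_full_rank; first exact: row_base_free.
by rewrite /row_free mxrank_tr; apply: col_base_full.
Qed.

Section PenroseFacts.
Variables (m k : nat) (A : 'M[R]_(m, k)) (X : 'M[R]_(k, m)).
Hypothesis AX : penrose A X.

Lemma penrose_trmx : penrose A^T X^T.
Proof.
case: AX => AXA XAX AXs XAs.
by split; rewrite -!trmx_mul ?trmxK ?mulmxA ?AXA ?XAX ?AXs ?XAs.
Qed.

Lemma penrose_gram_mulmx : A^T *m A *m X = A^T.
Proof.
by case: AX => AXA _ AXs _; rewrite -mulmxA -AXs -trmx_mul AXA.
Qed.

Lemma penrose_mulmx_gram : X *m A *m A^T = A^T.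
Proof.
by case: AX => AXA _ _ XAs; rewrite -XAs -trmx_mul mulmxA AXA.
Qed.

Lemma penrose_range : X = A^T *m (X^T *m X *m X^T) *m A^T.
Proof.
case: AX => _ XAX AXs XAs.
have XE1 : X = A^T *m X^T *m X by rewrite -trmx_mul XAs XAX.
have XE2 : X = X *m X^T *m A^T by rewrite -mulmxA -trmx_mul AXs mulmxA XAX.
by rewrite !mulmxA -XE1 -XE2.
Qed.

End PenroseFacts.

Lemma sym_pinv_range n (A : 'M[R]_n) : A^T = A -> exists Q, mp_pinv A = A *m Q *m A.
Proof. by move=> A_sym; rewrite -{2 3}A_sym; eexists; apply: penrose_range (mp_pinvP A). Qed.

Lemma gram_pinv_cancel m k (B : 'M[R]_(m, k)) (Y : 'M[R]_k) :
  B^T *m B *m Y *m (B^T *m B) = B^T *m B -> B *m Y *m (B^T *m B) = B.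
Proof.
move=> GYG; apply/eqP; rewrite -subr_eq0; apply/eqP.
have -> : B *m Y *m (B^T *m B) - B = B *m (Y *m (B^T *m B) - 1%:M).
  by rewrite mulmxBr mulmx1 !mulmxA.
by apply: gram_mulmx_eq0; rewrite mulmxBr mulmx1 !mulmxA -(mulmxA _ B^T B) GYG subrr.
Qed.

End Pseudoinverse.

Definition range_proj (R : realType) m k (B : 'M[R]_(m, k)) : 'M[R]_m :=
  B *m mp_pinv (B^T *m B) *m B^T.

Section RangeProjection.
Variables (R : realType) (m k : nat) (B : 'M[R]_(m, k)).
Let P := mp_pinv (B^T *m B).

Let BPG : B *m P *m (B^T *m B) = B.
Proof. by apply: gram_pinv_cancel; case: (mp_pinvP (B^T *m B)). Qed.

Let BPtG : B *m P^T *m (B^T *m B) = B.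
Proof.
have [GPG _ _ _] := penrose_trmx (mp_pinvP (B^T *m B)).
by rewrite trmx_mul trmxK in GPG; apply: gram_pinv_cancel.
Qed.

Let GPB : B^T *m B *m P *m B^T = B^T.
Proof. by have /(congr1 trmx) := BPtG; rewrite !trmx_mul !trmxK !mulmxA. Qed.

Lemma range_proj_mulmx : range_proj B *m B = B.
Proof. by rewrite /range_proj -mulmxA BPG. Qed.

Lemma trmx_mulmx_range_proj : B^T *m range_proj B = B^T.
Proof. by rewrite /range_proj !mulmxA GPB. Qed.

Lemma range_proj_idem : range_proj B *m range_proj B = range_proj B.
Proof. by rewrite [X in X *m _]/range_proj -!mulmxA trmx_mulmx_range_proj mulmxA. Qed.

Lemma range_proj_sym : (range_proj B)^T = range_proj B.
Proof.
have -> : (range_proj B)^T = B *m P^T *m B^T by rewrite /range_proj !trmx_mul trmxK mulmxA.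
transitivity (B *m P^T *m (B^T *m B *m P *m B^T)); first by rewrite GPB.
by rewrite !mulmxA -(mulmxA _ B^T B) BPtG.
Qed.

Lemma range_proj_sandwich (M : 'M[R]_m) :
  B^T *m (range_proj B *m M *m range_proj B) *m B = B^T *m M *m B.
Proof.
move: (range_proj B) range_proj_mulmx trmx_mulmx_range_proj => Z ZB BZ.
by rewrite !mulmxA BZ -mulmxA ZB.
Qed.

End RangeProjection.

Section OrthogonalProjection.
Variables (R : realType) (m : nat) (Z : 'M[R]_m).
Hypotheses (Z_sym : Z^T = Z) (Z_idem : Z *m Z = Z).

Lemma frob_inner_sandwich E : frob_inner (Z *m E *m Z) E = frob_norm2 (Z *m E *m Z).
Proof.
rewrite /frob_norm2 /frob_inner !trmx_mul Z_sym !mulmxA -(mulmxA (Z *m E^T) Z Z) Z_idem.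
by rewrite [RHS]mxtrace_mulC !mulmxA Z_idem.
Qed.

Lemma frob_norm2_sub_sandwich E :
  frob_norm2 (E - Z *m E *m Z) = frob_norm2 E - frob_inner (Z *m E *m Z) E.
Proof.
rewrite frob_norm2B frob_innerC -[frob_norm2 (Z *m E *m Z)]frob_inner_sandwich; ring.
Qed.

Lemma frob_inner_sandwich_le E : frob_inner (Z *m E *m Z) E <= frob_norm2 E.
Proof. by rewrite -subr_ge0 -frob_norm2_sub_sandwich frob_norm2_ge0. Qed.

End OrthogonalProjection.

Section Sketch.
Variables (R : realType) (n q : nat) (A : 'M[R]_n) (S : 'M[R]_(n, q)).

Lemma step_sub (X Ad : 'M[R]_n) : A *m Ad *m A = A ->
  step A S X - Ad = (X - Ad) - Zmat A S *m (X - Ad) *m Zmat A S.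
Proof.
move=> AAdA; have residual : A - A *m X *m A = - (A *m (X - Ad) *m A).
  by rewrite mulmxBr mulmxBl AAdA opprB.
by rewrite /step /Zmat residual mulmxN !mulNmx !mulmxA addrAC.
Qed.

Hypothesis A_sym : A^T = A.

Lemma Zmat_range_proj : Zmat A S = range_proj (A *m S).
Proof.
by rewrite /Zmat /range_proj trmx_mul A_sym !mulmxA -(mulmxA S^T A A) -(mulmxA S^T (A *m A) S).
Qed.

Lemma Zmat_sym : (Zmat A S)^T = Zmat A S.
Proof. by rewrite Zmat_range_proj range_proj_sym. Qed.

Lemma Zmat_idem : Zmat A S *m Zmat A S = Zmat A S.
Proof. by rewrite Zmat_range_proj range_proj_idem. Qed.

Lemma sketch_Zmat_sandwich (Rm : 'M[R]_n) :
  S^T *m A *m Rm *m A *m S = (A *m S)^T *m (Zmat A S *m Rm *m Zmat A S) *m (A *m S).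
Proof.
by rewrite Zmat_range_proj range_proj_sandwich trmx_mul A_sym !mulmxA.
Qed.

End Sketch.

Lemma kernel_sub_factor (F : fieldType) m l k (M : 'M[F]_(m, k)) (N : 'M[F]_(l, k)) :
  (forall v : 'cV_k, N *m v = 0 -> M *m v = 0) -> exists K, M = K *m N.
Proof.
move=> kerNM; apply/submxP; rewrite submxE; apply/eqP/matrixP => i j; rewrite mxE.
have /matrixP/(_ i 0) : M *m (cokermx N *m delta_mx j (0 : 'I_1)) = 0.
  by apply: kerNM; rewrite mulmxA mulmx_coker mul0mx.
by rewrite mulmxA -colE !mxE.
Qed.

(* Row-major vectorisation, to match the index order [mxtens_index] of [*t]. The paper
   stacks columns; as bbS and A *t A have equal Kronecker factors, this changes nothing. *)
Definition vec (R : pzRingType) m k (X : 'M[R]_(m, k)) : 'cV[R]_(m * k) :=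
  \col_l X (mxtens_unindex l).1 (mxtens_unindex l).2.

Section Vectorisation.
Variable R : realType.

Lemma sum_mxtens_unindex m k (F : 'I_m -> 'I_k -> R) :
  \sum_(l < m * k) F (mxtens_unindex l).1 (mxtens_unindex l).2 = \sum_a \sum_b F a b.
Proof.
rewrite pair_big; symmetry; apply: (reindex (@mxtens_unindex m k)) => //=.
by exists (@mxtens_index m k) => i; rewrite (mxtens_indexK, mxtens_unindexK).
Qed.

Lemma tensmx_mul_vec m n p s (A : 'M[R]_(m, n)) (B : 'M[R]_(p, s)) (X : 'M[R]_(n, s)) :
  (A *t B) *m vec X = vec (A *m X *m B^T).
Proof.
apply/matrixP => l j; rewrite ord1 {j}; case: (mxtens_indexP l) => i1 i2.
rewrite !mxE mxtens_indexK /=.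
under eq_bigr do rewrite !mxE mxtens_indexK /=.
rewrite (sum_mxtens_unindex (fun a b => A i1 a * B i2 b * X a b)).
under [RHS]eq_bigr do rewrite !mxE big_distrl /=.
by rewrite exchange_big /=; apply: eq_bigr => a _; apply: eq_bigr => b _; ring.
Qed.

Lemma frob_norm2_vec m k (X : 'M[R]_(m, k)) : frob_norm2 (vec X) = frob_norm2 X.
Proof.
rewrite !frob_norm2E; under eq_bigr do rewrite big_ord1 mxE.
exact: (sum_mxtens_unindex (fun a b => X a b ^+ 2)).
Qed.

Lemma vec0 m k : vec (0 : 'M[R]_(m, k)) = 0.
Proof. by apply/matrixP => i j; rewrite !mxE. Qed.

Lemma vec_eq0 m k (X : 'M[R]_(m, k)) : vec X = 0 -> X = 0.
Proof.
move=> X0; apply: frob_norm2_eq0.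
by rewrite -frob_norm2_vec X0 /frob_norm2 /frob_inner mulmx0 mxtrace0.
Qed.

Lemma vec_surj m k (v : 'cV[R]_(m * k)) : exists X, v = vec X.
Proof.
exists (\matrix_(a, b) v (mxtens_index (a, b)) 0).
by apply/matrixP => l j; rewrite ord1 !mxE -surjective_pairing mxtens_unindexK.
Qed.

End Vectorisation.

Lemma weighted_sum_le (F : realFieldType) (I : finType) (p b g : I -> F) :
  (forall i, 0 < p i) -> (forall i, 0 <= b i) -> (forall i, 0 <= g i) ->
  \sum_i b i * g i <= (\sum_i b i / p i) * \sum_i p i * g i.
Proof.
move=> p_gt0 b_ge0 g_ge0; rewrite mulr_sumr; apply: ler_sum => i _.
have bp_le : b i / p i <= \sum_j b j / p j.
  rewrite (bigD1 i) //= lerDl; apply: sumr_ge0 => j _.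
  by rewrite divr_ge0 ?b_ge0 // ltW.
have -> : b i * g i = b i / p i * (p i * g i) by rewrite mulrA divfK ?lt0r_neq0.
by rewrite ler_wpM2r // mulr_ge0 // ltW.
Qed.

Section SketchFamily.
Variables (R : realType) (n r : nat) (q : 'I_r -> nat) (S : forall i : 'I_r, 'M[R]_(n, q i)).
Variables (p : 'I_r -> R) (A : 'M[R]_n).

Lemma bbS_mul_vec (Y : 'M[R]_n) : bbS S *m vec Y = \mxcol_i vec ((S i)^T *m Y *m S i).
Proof. by rewrite /bbS mxcol_mul; apply: eq_mxcol => i; rewrite tensmx_mul_vec trmxK. Qed.

Hypothesis A_sym : A^T = A.

Lemma tensmx_sym_mul_vec (Rm : 'M[R]_n) : (A *t A) *m vec Rm = vec (A *m Rm *m A).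
Proof. by rewrite tensmx_mul_vec A_sym. Qed.

Lemma sketch_conditionE :
  (forall Rm : 'M[R]_n, (forall i, (S i)^T *m A *m Rm *m A *m S i = 0) ->
                         A *m Rm *m A = 0) <->
  (forall v : 'cV[R]_(n * n), bbS S *m (A *t A) *m v = 0 -> (A *t A) *m v = 0).
Proof.
split=> [cond v | cond Rm sketch0].
  have [Rm ->] := vec_surj v; rewrite -mulmxA !tensmx_sym_mul_vec bbS_mul_vec => col0.
  rewrite cond ?vec0 // => i; apply: vec_eq0.
  by have := congr1 (fun M => submxcol M i) col0; rewrite mxcolK submxcol0 !mulmxA.
apply: vec_eq0; rewrite -tensmx_sym_mul_vec cond // -mulmxA tensmx_sym_mul_vec bbS_mul_vec.
by rewrite -(mxcol0 1); apply: eq_mxcol => i; rewrite !mulmxA sketch0 vec0.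
Qed.

Lemma EZRZ_frob_inner (E : 'M[R]_n) :
  frob_inner (EZRZ S p A E) E = \sum_i p i * frob_norm2 (Zmat A (S i) *m E *m Zmat A (S i)).
Proof.
rewrite /EZRZ frob_inner_suml; apply: eq_bigr => i _.
by rewrite frob_innerZl frob_inner_sandwich ?Zmat_sym ?Zmat_idem.
Qed.

Hypothesis p_gt0 : forall i, 0 < p i.

Lemma EZRZ_frob_inner_ge0 (E : 'M[R]_n) : 0 <= frob_inner (EZRZ S p A E) E.
Proof.
by rewrite EZRZ_frob_inner sumr_ge0 // => i _; rewrite mulr_ge0 ?frob_norm2_ge0 ?ltW.
Qed.

Lemma frob_norm2_range_le (Q : 'M[R]_n) :
  frob_norm2 (A *m Q *m A) <=
  frob_norm2 (mp_pinv A) * frob_norm2 (mp_pinv A) * frob_norm2 (A *m (A *m Q *m A) *m A).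
Proof.
have AdAA : mp_pinv A *m A *m A = A by have := penrose_mulmx_gram (mp_pinvP A); rewrite A_sym.
have AAAd : A *m A *m mp_pinv A = A by have := penrose_gram_mulmx (mp_pinvP A); rewrite A_sym.
have range_eq : mp_pinv A *m (A *m (A *m Q *m A) *m A) *m mp_pinv A = A *m Q *m A.
  by rewrite !mulmxA AdAA -(mulmxA (A *m Q) A A) -(mulmxA (A *m Q)) AAAd.
by have := frob_norm2_mul3_le (mp_pinv A) (A *m (A *m Q *m A) *m A) (mp_pinv A); rewrite range_eq.
Qed.

Lemma frob_norm2_sketch_le K (Rm : 'M[R]_n) :
  A *t A = K *m (bbS S *m (A *t A)) ->
  frob_norm2 (A *m Rm *m A) <= frob_norm2 K * \sum_i frob_norm2 ((S i)^T *m A *m Rm *m A *m S i).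
Proof.
move=> AA_fact; rewrite -frob_norm2_vec -tensmx_sym_mul_vec AA_fact -mulmxA.
apply: le_trans (frob_norm2_mul_le _ _) _; rewrite ler_wpM2l ?frob_norm2_ge0 //.
rewrite -mulmxA tensmx_sym_mul_vec bbS_mul_vec frob_norm2_mxcol.
by apply: ler_sum => i _; rewrite frob_norm2_vec !mulmxA lexx.
Qed.

Lemma sketch_sum_le : exists2 beta, 0 <= beta & forall Rm : 'M[R]_n,
  \sum_i frob_norm2 ((S i)^T *m A *m Rm *m A *m S i) <= beta * frob_inner (EZRZ S p A Rm) Rm.
Proof.
pose b i := frob_norm2 (A *m S i)^T * frob_norm2 (A *m S i).
have b_ge0 i : 0 <= b i by rewrite mulr_ge0 ?frob_norm2_ge0.
exists (\sum_i b i / p i) => [|Rm].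
  by rewrite sumr_ge0 // => i _; rewrite divr_ge0 ?b_ge0 ?ltW.
rewrite EZRZ_frob_inner; apply: le_trans (weighted_sum_le p_gt0 b_ge0 _); last first.
  by move=> i; apply: frob_norm2_ge0.
by apply: ler_sum => i _; rewrite sketch_Zmat_sandwich //; apply: frob_norm2_mul3_le.
Qed.

Lemma EZRZ_coercive :
  (forall v : 'cV[R]_(n * n), bbS S *m (A *t A) *m v = 0 -> (A *t A) *m v = 0) ->
  exists2 c, 0 < c & forall Q : 'M[R]_n,
    c * frob_norm2 (A *m Q *m A) <= frob_inner (EZRZ S p A (A *m Q *m A)) (A *m Q *m A).
Proof.
move=> /kernel_sub_factor [K AA_fact]; have [beta beta_ge0 sketch_le] := sketch_sum_le.
pose C := frob_norm2 (mp_pinv A) * frob_norm2 (mp_pinv A) * (frob_norm2 K * beta).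
have C_ge0 : 0 <= C by rewrite !mulr_ge0 ?frob_norm2_ge0.
have C1_gt0 : 0 < C + 1 by rewrite ltr_wpDl.
exists (C + 1)^-1 => [|Q]; first by rewrite invr_gt0.
have norm_le : frob_norm2 (A *m Q *m A) <= C * frob_inner (EZRZ S p A (A *m Q *m A)) (A *m Q *m A).
  apply: le_trans (frob_norm2_range_le Q) _; rewrite /C -!mulrA.
  do 2 (apply: ler_wpM2l; first exact: frob_norm2_ge0).
  apply: le_trans (frob_norm2_sketch_le _ AA_fact) _.
  by apply: ler_wpM2l; [exact: frob_norm2_ge0 | exact: sketch_le].
rewrite -(ler_pM2l C1_gt0) mulrA mulfV ?gt_eqF // mul1r; apply: le_trans norm_le _.
by rewrite ler_wpM2r ?EZRZ_frob_inner_ge0 // lerDl ler01.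
Qed.

End SketchFamily.

Lemma sum_tuple0 (V : nmodType) (T : finType) (F : 0.-tuple T -> V) :
  \sum_(s : 0.-tuple T) F s = F [tuple].
Proof. by rewrite (big_pred1 [tuple]) // => s /=; apply/esym/eqP; apply: tuple0. Qed.

Lemma sum_tuple_cons (V : nmodType) (T : finType) k (F : k.+1.-tuple T -> V) :
  \sum_(s : k.+1.-tuple T) F s = \sum_(i : T) \sum_(t : k.-tuple T) F [tuple of i :: t].
Proof.
rewrite pair_big /=; apply: (reindex (fun x : T * k.-tuple T => [tuple of x.1 :: x.2])).
exists (fun s => (thead s, [tuple of behead s])) => [[i t] _ | s _] /=.
  by rewrite theadE; congr pair; apply: val_inj.
by rewrite -tuple_eta.
Qed.

Definition rayleigh_set (R : realType) (n r : nat) (q : 'I_r -> nat)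
    (S : forall i : 'I_r, 'M[R]_(n, q i)) (p : 'I_r -> R) (A : 'M[R]_n) : set R :=
  [set x : R | exists Rm : 'M[R]_n,
    (exists Q : 'M[R]_n, Rm = A *m Q *m A) /\ frob_norm2 Rm = 1 /\
    x = frob_inner (EZRZ S p A Rm) Rm].

Section Convergence.
Variables (R : realType) (n r : nat) (q : 'I_r -> nat) (S : forall i : 'I_r, 'M[R]_(n, q i)).
Variables (p : 'I_r -> R) (A : 'M[R]_n).
Local Open Scope classical_set_scope.

Lemma expected_err0 (X0 : 'M[R]_n) : expected_err S p A X0 0 = frob_norm2 (X0 - mp_pinv A).
Proof. by rewrite /expected_err sum_tuple0 big_nil mul1r. Qed.

Lemma expected_errS (X0 : 'M[R]_n) k :
  expected_err S p A X0 k.+1 = \sum_i p i * expected_err S p A (step A (S i) X0) k.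
Proof.
rewrite /expected_err sum_tuple_cons; apply: eq_bigr => i _.
by rewrite mulr_sumr; apply: eq_bigr => t _; rewrite big_cons mulrA.
Qed.

Hypotheses (p_gt0 : forall i, 0 < p i) (p_sum1 : \sum_(i < r) p i = 1).
Hypotheses (A_sym : A^T = A) (A_neq0 : A != 0).

Local Notation rayleigh X := (frob_inner (EZRZ S p A X) X).

Lemma rateE : rate S p A = 1 - inf (rayleigh_set S p A).
Proof. by []. Qed.

Lemma rayleigh_le (X : 'M[R]_n) : rayleigh X <= frob_norm2 X.
Proof.
rewrite /EZRZ frob_inner_suml -[leRHS]mul1r -p_sum1 mulr_suml; apply: ler_sum => i _.
rewrite frob_innerZl; apply: ler_wpM2l; first exact: ltW.
by apply: frob_inner_sandwich_le; rewrite ?Zmat_sym ?Zmat_idem.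
Qed.

Lemma rayleighZ a (X : 'M[R]_n) : rayleigh (a *: X) = a ^+ 2 * rayleigh X.
Proof.
rewrite !EZRZ_frob_inner // mulr_sumr; apply: eq_bigr => i _.
by rewrite -scalemxAr -scalemxAl frob_norm2Z mulrCA.
Qed.

Lemma rayleigh_set_lb : lbound (rayleigh_set S p A) 0.
Proof. by move=> _ [Rm [_ [_ ->]]]; apply: EZRZ_frob_inner_ge0. Qed.

Lemma rayleigh_set_normalize (X Q : 'M[R]_n) : X = A *m Q *m A -> frob_norm2 X != 0 ->
  rayleigh_set S p A ((frob_norm2 X)^-1 * rayleigh X).
Proof.
move=> XE X_neq0; pose s := (Num.sqrt (frob_norm2 X))^-1.
have s2 : s ^+ 2 = (frob_norm2 X)^-1 by rewrite exprVn sqr_sqrtr ?frob_norm2_ge0.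
exists (s *: X); split; first by exists (s *: Q); rewrite XE scalemxAl scalemxAr.
by rewrite frob_norm2Z rayleighZ s2 mulVf.
Qed.

Lemma rayleigh_set_neq0 : rayleigh_set S p A !=set0.
Proof.
have AA_neq0 : frob_norm2 (A *m 1%:M *m A) != 0.
  apply: contraNneq A_neq0 => /frob_norm2_eq0 AA0.
  by apply/eqP; rewrite -[A]mulmx1 gram_mulmx_eq0 // A_sym -AA0 !mulmx1.
by eexists; apply: rayleigh_set_normalize AA_neq0.
Qed.

Lemma rate_ge0 : 0 <= rate S p A.
Proof.
have [x x_in] := rayleigh_set_neq0.
rewrite rateE subr_ge0; apply: le_trans (ge_inf (ex_intro _ 0 rayleigh_set_lb) x_in) _.
by case: x_in => Rm [_ [Rm1 ->]]; rewrite -Rm1 rayleigh_le.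
Qed.

Lemma inf_rayleigh_le (X Q : 'M[R]_n) : X = A *m Q *m A ->
  inf (rayleigh_set S p A) * frob_norm2 X <= rayleigh X.
Proof.
move=> XE; have [X0 | X_neq0] := eqVneq (frob_norm2 X) 0.
  by rewrite X0 mulr0 (frob_norm2_eq0 X0) EZRZ_frob_inner_ge0.
have X_gt0 : 0 < frob_norm2 X by rewrite lt0r X_neq0 frob_norm2_ge0.
rewrite -ler_pdivlMr // mulrC.
apply: ge_inf; first by exists 0; apply: rayleigh_set_lb.
exact: rayleigh_set_normalize XE X_neq0.
Qed.

Lemma rate_lt1 :
  (forall v : 'cV[R]_(n * n), bbS S *m (A *t A) *m v = 0 -> (A *t A) *m v = 0) ->
  rate S p A < 1.
Proof.
move=> /(EZRZ_coercive A_sym p_gt0) [c c_gt0 coercive].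
rewrite rateE ltrBlDr ltrDl; apply: lt_le_trans c_gt0 _.
apply: lb_le_inf rayleigh_set_neq0 _ => _ [Rm [[Q ->] [Rm1 ->]]].
by have := coercive Q; rewrite Rm1 mulr1.
Qed.

Lemma step_sub_range i (X0 Q : 'M[R]_n) : X0 - mp_pinv A = A *m Q *m A ->
  exists Q', step A (S i) X0 - mp_pinv A = A *m Q' *m A.
Proof.
have [AAdA _ _ _] := mp_pinvP A; move=> X0E; rewrite step_sub // X0E /Zmat.
set P := mp_pinv _.
exists (Q - S i *m P *m (S i)^T *m A *m (A *m Q *m A) *m A *m S i *m P *m (S i)^T).
by rewrite mulmxBr mulmxBl !mulmxA.
Qed.

Lemma expected_step_le (X0 Q : 'M[R]_n) : X0 - mp_pinv A = A *m Q *m A ->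
  \sum_i p i * frob_norm2 (step A (S i) X0 - mp_pinv A) <= rate S p A * frob_norm2 (X0 - mp_pinv A).
Proof.
have [AAdA _ _ _] := mp_pinvP A; move=> X0E; set E := X0 - mp_pinv A in X0E *.
under eq_bigr do rewrite step_sub // -/E frob_norm2_sub_sandwich ?Zmat_sym ?Zmat_idem // mulrBr.
rewrite sumrB -mulr_suml p_sum1 mul1r.
have -> : \sum_i p i * frob_inner (Zmat A (S i) *m E *m Zmat A (S i)) E = rayleigh E.
  by rewrite /EZRZ frob_inner_suml; apply: eq_bigr => i _; rewrite frob_innerZl.
by rewrite rateE mulrBl mul1r lerD2l lerN2 (inf_rayleigh_le X0E).
Qed.

Lemma expected_err_le k (X0 Q : 'M[R]_n) : X0 - mp_pinv A = A *m Q *m A ->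
  expected_err S p A X0 k <= rate S p A ^+ k * frob_norm2 (X0 - mp_pinv A).
Proof.
elim: k X0 Q => [|k IHk] X0 Q X0E; first by rewrite expected_err0 mul1r.
rewrite expected_errS exprSr -mulrA.
apply: le_trans (ler_wpM2l (exprn_ge0 k rate_ge0) (expected_step_le X0E)).
rewrite mulr_sumr; apply: ler_sum => i _; rewrite mulrCA; apply: ler_wpM2l; first exact: ltW.
by have [Q' stepE] := step_sub_range i X0E; apply: IHk stepE.
Qed.

End Convergence.

Theorem lemma8 (R : realType) (n r : nat) (q : 'I_r -> nat)
  (S : forall i : 'I_r, 'M[R]_(n, q i)) (p : 'I_r -> R)
  (A W : 'M[R]_n) :
  (forall i, 0 < p i) -> \sum_(i < r) p i = 1 ->
  A^T = A -> A != 0 ->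
  ((forall Rm : 'M[R]_n, (forall i, (S i)^T *m A *m Rm *m A *m S i = 0) ->
                         A *m Rm *m A = 0) ->
   rate S p A < 1 /\
   forall k : nat,
     expected_err S p A (A *m W *m A) k
       <= rate S p A ^+ k * frob_norm2 (A *m W *m A - mp_pinv A))
  /\
  ((forall Rm : 'M[R]_n, (forall i, (S i)^T *m A *m Rm *m A *m S i = 0) ->
                         A *m Rm *m A = 0) <->
   (forall v : 'cV[R]_(n * n), bbS S *m (A *t A) *m v = 0 -> (A *t A) *m v = 0)).
Proof.
move=> p_gt0 p_sum1 A_sym A_neq0; split; last exact: sketch_conditionE.
move=> /(sketch_conditionE S A_sym) sketch_cond; split; first exact: rate_lt1.
have [Q AdE] := sym_pinv_range A_sym.
have X0E : A *m W *m A - mp_pinv A = A *m (W - Q) *m A by rewrite AdE mulmxBr mulmxBl.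
by move=> k; apply: expected_err_le X0E.
Qed.
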